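(* Let $n>2$ be odd, let $\zeta\in\bar{\mathbb Q}$ be a primitive $n$-th root of unity, let $c$ be a positive rational number such that $x^n-c$ is irreducible over $\mathbb Q$, and let $a=c^{1/n}$ be the positive real root of $x^n-c$. Let $l$ be a positive divisor of $n$, $L=\mathbb Q(a)$ and $M=\mathbb Q(a,\zeta^l)$. Then $\rho_{\mathbb Q}(M,L)=n/l$ and $\tau_{\mathbb Q}(M,L)=l$; in particular $\tau_{\mathbb Q}(M,L)\,\rho_{\mathbb Q}(M,L)=[L:\mathbb Q]$.
   Context: For finite extensions $L/K$, $M/K$ inside a fixed algebraic closure: writing $L=K(\alpha)$ with minimal polynomial $f$ of $\alpha$ over $K$, the root capacity $\rho_K(M,L)$ is the number of roots of $f$ lying in $M$ (independent of the choice of $\alpha$). If $L_1,\dots,L_a$ are all the distinct subfields of $M$ isomorphic to $L$ over $K$, the intersection indicium is $\tau_K(M,L)=[L_1\cap\cdots\cap L_a:K]$ if $a\ge1$ and $0$ if $a=0$. *)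

From HB Require Import structures.
From mathcomp Require Import all_boot all_order all_algebra all_field.
From Stdlib Require Import ClassicalEpsilon.
Set Implicit Arguments. Unset Strict Implicit. Unset Printing Implicit Defensive.
Import Order.TTheory GRing.Theory Num.Theory.
Local Open Scope ring_scope.

(* All fields live inside a finite extension E of a base field F; for the
   main theorem F = rat, E is embedded in algC (the fixed algebraic closure),
   and every field involved (L, M, the conjugates of L inside M) lies in E. *)

Section RootCapacity.
Variables (F : fieldType) (E : fieldExtType F).

Definition is_roots_in (M : {vspace E}) (p : {poly E}) (s : seq E) : Prop :=
  uniq s /\ forall x, x \in s <-> (x \in M /\ root p x).

Definition num_roots_in (M : {vspace E}) (p : {poly E}) : nat :=
  size (epsilon (inhabits [::]) (is_roots_in M p)).

Definition prim_elt (K L : {vspace E}) : E :=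
  epsilon (inhabits 0) (fun alpha => <<K; alpha>>%VS = L).

Definition root_capacity (K M L : {vspace E}) : nat :=
  num_roots_in M (minPoly K (prim_elt K L)).

Definition iso_over (K L L' : {vspace E}) : Prop :=
  exists f : 'End(E), kHom K L f /\ (f @: L)%VS = L'.

Definition conj_in (K M L L' : {vspace E}) : Prop :=
  (L' <= M)%VS /\ iso_over K L L'.

Definition conj_intersection (K M L : {vspace E}) : {vspace E} :=
  epsilon (inhabits 0%VS) (fun I : {vspace E} =>
    forall x, x \in I <-> (forall L', conj_in K M L L' -> x \in L')).

Definition intersection_indicium (K M L : {vspace E}) : nat :=
  if excluded_middle_informative (exists L', conj_in K M L L')
  then \dim_K (conj_intersection K M L) else 0%N.

End RootCapacity.

From HB Require Import structures.
From mathcomp Require Import all_boot all_order all_algebra all_field.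
From mathcomp Require Import ring.
From Stdlib Require Import ClassicalEpsilon.
Import Order.TTheory GRing.Theory Num.Theory.
Set Implicit Arguments. Unset Strict Implicit. Unset Printing Implicit Defensive.

(* Every root of [X^n - c] is some [a * zeta ^+ i].  Since [iota] maps [Q(a)]
   into the reals and [n] is odd, the only root of unity of odd order in
   [Q(a)] is [1]; together with the fact that a real element of [Q(zeta)]
   with rational [n]-th power is rational, this gives [[K(a) : K] = n] for
   every subfield [K] of [Q(zeta)], hence [M] meets [Q(zeta)] in [Q(omega)],
   [omega = zeta ^+ l].  For odd [n], [zeta ^+ k] lies in [Q(omega)] only if
   [l] divides [k], so the roots of [X^n - c] in [M] are the [n / l] numbers
   [a * omega ^+ j], and any primitive element of [L] has as many conjugates
   in [M] as [a] has.  The conjugates of [L] in [M] are the fields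
   [Q(a * omega ^+ j)]; they all contain [a ^+ (n / l)], and comparing degrees
   with a Kummer argument shows [Q(a) :&: Q(a * omega) = Q(a ^+ (n / l))],
   a field of degree [l]. *)

Lemma coprime_quotient_shift_exists (N q : nat) :
  prime q -> q %| N -> odd N ->
  exists2 s, coprime (N %/ q * s + 1) N & ~~ (q %| s).
Proof.
move=> q_pr qN N_odd; set x := N %/ q.
have DN : N = x * q by rewrite divnK.
have q_gt2 : 2 < q.
  rewrite ltn_neqAle prime_gt1 // andbT; apply: contraTneq (dvdn_odd qN N_odd).
  by move <-.
have x_coprime s : coprime (x * s + 1) x.
  by rewrite -coprime_modl mulnC modnMDl coprime_modl coprime1n.
have q_ndvd1 : ~~ (q %| 1) by rewrite dvdn1 gtn_eqF ?prime_gt1.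
have [qx1 | qNx1] := boolP (q %| x + 1).
  exists 2; last by apply/negP => /(dvdn_leq (isT : 0 < 2)); rewrite leqNgt q_gt2.
  rewrite DN coprimeMr x_coprime coprime_sym prime_coprime //.
  have -> : x * 2 + 1 = x + (x + 1) by rewrite mulnS muln1 addnA.
  by rewrite dvdn_addl //; apply: contraNN q_ndvd1 => qx; rewrite -(dvdn_addr 1 qx).
exists 1; last by [].
by rewrite DN coprimeMr x_coprime coprime_sym prime_coprime // muln1.
Qed.

Local Open Scope ring_scope.

Lemma prim_root_neq0 (R : nzRingType) (n : nat) (z : R) :
  n.-primitive_root z -> z != 0.
Proof.
move=> z_prim; apply: contra_eq_neq (prim_expr_order z_prim) => ->.
by rewrite expr0n gtn_eqF ?(prim_order_gt0 z_prim) // eq_sym oner_neq0.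
Qed.

Lemma real_unity_odd_eq1 (R : numDomainType) (x : R) (m : nat) :
  odd m -> x \is Num.real -> x ^+ m = 1 -> x = 1.
Proof.
move=> m_odd xR xm; have m_gt0 : (0 < m)%N by case: m m_odd {xm}.
have x_ge0 : 0 <= x by rewrite -(real_exprn_odd_ge0 xR m_odd) xm ler01.
by apply/eqP; rewrite -(pexpr_eq1 m_gt0 x_ge0) xm.
Qed.

Lemma conj_unity (C : numClosedFieldType) (n : nat) (u : C) :
  (0 < n)%N -> u ^+ n = 1 -> u^* = u ^+ n.-1.
Proof.
move=> n_gt0 un; have u_neq0 : u != 0.
  by apply: contra_eq_neq un => ->; rewrite expr0n gtn_eqF // eq_sym oner_neq0.
have u_norm : `|u| = 1.
  by apply/eqP; rewrite -(pexpr_eq1 n_gt0) ?normr_ge0 // -normrX un normr1.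
by apply: (mulfI u_neq0); rewrite -normCK u_norm expr1n -exprS prednK.
Qed.

Local Notation QtoC := (map_poly (ratr : rat -> algC)).

Lemma aut_QtoC_horner (nu : {rmorphism algC -> algC}) (P : {poly rat}) y :
  nu (QtoC P).[y] = (QtoC P).[nu y].
Proof.
rewrite -horner_map -map_poly_comp; congr (_.[_]).
by apply: eq_map_poly => r /=; rewrite fmorph_rat.
Qed.

(* [P %% 'Phi_n] has fewer than [totient n] coefficients but takes the value
   [b] at the [totient n] primitive roots, so it is the constant [b]. *)
Lemma Crat_prim_root_invariant (n : nat) (z b : algC) (P : {poly rat}) :
  n.-primitive_root z ->
  (forall k : 'I_n, coprime k n -> (QtoC P).[z ^+ k] = b) -> b \in Crat.
Proof.
move=> z_prim Pb; have n_gt0 := prim_order_gt0 z_prim.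
pose Phi : {poly rat} := map_poly intr 'Phi_n.
have PhiE : QtoC Phi = cyclotomic z n.
  rewrite -map_poly_comp (eq_map_poly (ratr_int _)); exact: Cintr_Cyclotomic.
have size_Phi : size Phi = (totient n).+1.
  by rewrite -(size_map_poly (ratr : rat -> algC)) PhiE size_cyclotomic.
set R := P %% Phi.
have Rb (k : 'I_n) : coprime k n -> (QtoC R).[z ^+ k] = b.
  move=> k_co; rewrite -(Pb k k_co) [in RHS](divp_eq P Phi) rmorphD rmorphM /=.
  have : root (cyclotomic z n) (z ^+ k).
    by rewrite root_cyclotomic ?prim_root_exp_coprime.
  by rewrite -PhiE hornerD hornerM => /rootP ->; rewrite mulr0 add0r.
have size_R : (size (QtoC R) <= totient n)%N.
  by rewrite size_map_poly -ltnS -size_Phi ltn_modp -size_poly_gt0 size_Phi.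
suff RE : QtoC R = b%:P.
  have := congr1 (fun p : {poly algC} => p`_0) RE.
  by rewrite coef_map coefC /= => <-; apply: Crat_rat.
apply/eqP; rewrite -subr_eq0; apply/contraT => nzD.
set units := [seq k : 'I_n <- index_enum 'I_n | coprime k n].
set prims := [seq z ^+ k | k : 'I_n <- units].
have prims_roots : all (root (QtoC R - b%:P)) prims.
  apply/allP => w /mapP[k]; rewrite mem_filter => /andP[k_co _] ->.
  by rewrite rootE !hornerE Rb // subrr.
have prims_uniq : uniq_roots prims.
  rewrite uniq_rootsE map_inj_in_uniq ?filter_uniq ?index_enum_uniq // => i j _ _.
  by move/eqP; rewrite (eq_prim_root_expr z_prim) !modn_small // => /eqP/val_inj.
have := dvdp_leq nzD (uniq_roots_dvdp prims_roots prims_uniq).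
rewrite big_map big_filter -/(cyclotomic z n) size_cyclotomic ltnNge => /negP[].
apply: leq_trans (size_polyD _ _) _; rewrite size_polyN geq_max size_R.
by rewrite (leq_trans (size_polyC_leq1 b)) // totient_gt0.
Qed.

(* For [b = (QtoC P).[z]] and an automorphism [nu] of [Q(z)], [nu] commutes
   with complex conjugation, so [nu b / b] is a real [n]-th root of unity,
   hence [1] as [n] is odd. *)
Lemma Crat_real_prim_root_poly (n : nat) (z : algC) (P : {poly rat}) :
  odd n -> n.-primitive_root z ->
  (QtoC P).[z] \is Num.real -> (QtoC P).[z] ^+ n \in Crat ->
  (QtoC P).[z] \in Crat.
Proof.
move=> n_odd z_prim; set b := _.[z] => bR bn_rat; have n_gt0 := prim_order_gt0 z_prim.
have [-> | b_neq0] := eqVneq b 0; first exact: rpred0.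
apply: (@Crat_prim_root_invariant _ _ _ P z_prim) => k k_co.
have [nu Dnu] := Qn_aut_exists k_co.
have zn : z ^+ n = 1 := prim_expr_order z_prim.
have nuz : nu z = z ^+ k by apply: Dnu.
have zkn : (z ^+ k) ^+ n = 1 by rewrite exprAC zn expr1n.
have nub : nu b = (QtoC P).[z ^+ k] by rewrite aut_QtoC_horner nuz.
have nubR : nu b \is Num.real.
  have conj_b : b^* = (QtoC P).[z ^+ n.-1].
    by rewrite (aut_QtoC_horner Num.conj); congr (_.[_]); apply: conj_unity.
  have conj_nub : (nu b)^* = (QtoC P).[(z ^+ k) ^+ n.-1].
    by rewrite nub (aut_QtoC_horner Num.conj); congr (_.[_]); apply: conj_unity.
  apply/CrealP; rewrite conj_nub -[in RHS](conj_Creal bR) conj_b.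
  by rewrite aut_QtoC_horner rmorphXn nuz.
have : nu b / b = 1.
  apply: (real_unity_odd_eq1 n_odd); first by rewrite rpred_div.
  by rewrite exprMn exprVn -rmorphXn aut_Crat // divff // expf_neq0.
by rewrite -nub => /divr1_eq.
Qed.

(* If a prime [q] divides [r], the automorphism [x |-> x ^+ j] with
   [j = 1 (mod N / q)], [j <> 1 (mod N)] fixes [x ^+ r], hence [x]: absurd. *)
Lemma odd_prim_root_Fadjoin_exp (N r : nat) (x : algC) (P : {poly rat}) :
  odd N -> N.-primitive_root x -> (r %| N)%N -> x = (QtoC P).[x ^+ r] -> r = 1%N.
Proof.
move=> N_odd x_prim rN DxP; have N_gt0 := prim_order_gt0 x_prim.
have r_gt0 : (0 < r)%N by apply: dvdn_gt0 rN.
apply/eqP; apply: contraT; rewrite neq_ltn ltnNge r_gt0 /= => r_gt1.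
set q := pdiv r; have q_pr : prime q := pdiv_prime r_gt1.
have qr : (q %| r)%N := pdiv_dvd r.
have qN : (q %| N)%N := dvdn_trans qr rN.
have [s j_co q_ndvd_s] := coprime_quotient_shift_exists q_pr qN N_odd.
set j := (N %/ q * s + 1)%N in j_co.
have [nu Dnu] := Qn_aut_exists j_co.
have nux : nu x = x ^+ j by apply: Dnu; exact: prim_expr_order.
have Nq_gt0 : (0 < N %/ q)%N by rewrite divn_gt0 ?prime_gt0 // dvdn_leq.
have N_dvd : (N %| N %/ q * s * r)%N.
  by rewrite mulnAC dvdn_mulr // -{1}(divnK qN) dvdn_pmul2l.
have xjr : (x ^+ j) ^+ r = x ^+ r.
  have xs : x ^+ (N %/ q * s * r) = 1 by apply/eqP; rewrite -(prim_order_dvd x_prim).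
  by rewrite -exprM mulnDl mul1n exprD xs mul1r.
have xj : x ^+ j = x by rewrite -nux {1}DxP aut_QtoC_horner rmorphXn nux xjr -DxP.
have : x ^+ (N %/ q * s) = 1.
  by apply: (mulIf (prim_root_neq0 x_prim)); rewrite mul1r -exprSr -addn1.
move/eqP; rewrite -(prim_order_dvd x_prim) -[X in (X %| _)%N](divnK qN).
by rewrite dvdn_pmul2l // (negbTE q_ndvd_s).
Qed.

Lemma Xn_subC_prod_prim_root (R : fieldType) (n : nat) (z x : R) :
  n.-primitive_root z ->
  'X^n - (x ^+ n)%:P = \prod_(i < n) ('X - (x * z ^+ i)%:P).
Proof.
move=> z_prim; have n_gt0 := prim_order_gt0 z_prim.
have [-> | x_neq0] := eqVneq x 0.
  rewrite expr0n gtn_eqF // subr0 (eq_bigr (fun=> 'X)) => [|i _].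
    by rewrite prodr_const card_ord.
  by rewrite mul0r subr0.
set rs := [seq x * z ^+ i | i : 'I_n <- enum 'I_n].
have rs_roots : all (root ('X^n - (x ^+ n)%:P)) rs.
  apply/allP => _ /mapP[i _ ->]; rewrite rootE !hornerE exprMn exprAC.
  by rewrite (prim_expr_order z_prim) expr1n mulr1 subrr.
have rs_uniq : uniq_roots rs.
  rewrite uniq_rootsE map_inj_uniq ?enum_uniq // => i j /(mulfI x_neq0)/eqP.
  by rewrite (eq_prim_root_expr z_prim) !modn_small // => /eqP/val_inj.
have rs_dvd := uniq_roots_dvdp rs_roots rs_uniq; rewrite big_map in rs_dvd.
have : size (\prod_(i <- enum 'I_n) ('X - (x * z ^+ i)%:P))
       == size ('X^n - (x ^+ n)%:P).
  by rewrite size_prod_XsubC size_XnsubC // size_enum_ord.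
rewrite (dvdp_size_eqp rs_dvd) eqp_monic ?monicXnsubC ?monic_prod_XsubC //.
by move/eqP <-; rewrite big_enum.
Qed.

Lemma horner0_prod_XsubC_mul (R : comNzRingType) (I : Type) (s : seq I)
    (e : I -> nat) (x z : R) :
  (\prod_(i <- s) ('X - (x * z ^+ e i)%:P)).[0]
    = (- x) ^+ size s * z ^+ (\sum_(i <- s) e i).
Proof.
elim: s => [|i s IH]; first by rewrite !big_nil hornerC mulr1.
by rewrite !big_cons hornerM IH hornerXsubC /= sub0r exprS exprD; ring.
Qed.

Section FieldExtension.
Variables (F : fieldType) (E : fieldExtType F).
Implicit Types (K : {subfield E}) (x y t : E) (p Q R : {poly E}).

Lemma root_minPoly_conj K x t p :
  p \is a polyOver K -> root p x -> root (minPoly K x) t -> root p t.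
Proof.
move=> Kp px xt; have /dvdpP[q ->] := minPoly_dvdp Kp px.
by rewrite rootM xt orbT.
Qed.

Lemma root_minPoly_horner K y t Q :
  Q \is a polyOver K -> root (minPoly K y) t -> root (minPoly K Q.[y]) Q.[t].
Proof.
move=> KQ yt; suff : root (minPoly K Q.[y] \Po Q) t by rewrite /root horner_comp.
apply: root_minPoly_conj yt; first by rewrite polyOver_comp ?minPolyOver.
by rewrite /root horner_comp minPolyxx.
Qed.

Lemma horner_minPoly_cancel K y t Q R :
  Q \is a polyOver K -> R \is a polyOver K -> R.[Q.[y]] = y ->
  root (minPoly K y) t -> R.[Q.[t]] = t.
Proof.
move=> KQ KR RQy yt.
suff : root (R \Po Q - 'X) t by rewrite /root !hornerE horner_comp subr_eq0 => /eqP.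
apply: root_minPoly_conj yt; first by rewrite rpredB ?polyOver_comp ?polyOverX.
by rewrite /root !hornerE horner_comp RQy subrr.
Qed.

Lemma minPoly_irreducible (p : {poly F}) y :
  p \is monic -> irreducible_poly p -> root (map_poly (in_alg E) p) y ->
  minPoly 1 y = map_poly (in_alg E) p.
Proof.
move=> p_monic [_ p_irr] py; have /polyOver1P[q Dq] := minPolyOver 1 y.
have q_size : size q != 1%N by rewrite -(size_map_poly (in_alg E)) -Dq size_minPoly.
have q_monic : q \is monic by rewrite -(map_monic (in_alg E)) -Dq monic_minPoly.
have : q %| p by rewrite -(dvdp_map (in_alg E)) -Dq minPoly_dvdp ?alg_polyOver.
by move/(p_irr q q_size); rewrite eqp_monic // Dq => /eqP ->.
Qed.

Lemma adjoin_degree_le_exp K x (m : nat) :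
  (0 < m)%N -> x ^+ m \in K -> (adjoin_degree K x <= m)%N.
Proof.
move=> m_gt0 xmK; rewrite -ltnS -size_minPoly -(size_XnsubC (x ^+ m) m_gt0).
apply: dvdp_leq; first by rewrite -size_poly_eq0 size_XnsubC.
by apply: minPoly_dvdp; rewrite ?polyOverXnsubC // rootE !hornerE subrr.
Qed.

Lemma Fadjoin_subfield_eq K x : (K <= <<1; x>>)%VS -> <<K; x>>%VS = <<1; x>>%VS.
Proof.
move=> sK; apply/eqP; rewrite eqEsubv (adjoinSl _ (sub1v K)) andbT.
by apply/FadjoinP; rewrite sK memv_adjoin.
Qed.

Lemma num_roots_inE (M : {vspace E}) p s :
  is_roots_in M p s -> num_roots_in M p = size s.
Proof.
move=> [s_uniq s_roots]; rewrite /num_roots_in.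
have [s'_uniq s'_roots] := epsilon_spec (inhabits [::]) (is_roots_in M p)
  (ex_intro _ s (conj s_uniq s_roots)).
apply/perm_size/uniq_perm => // t.
by apply/idP/idP => [/s'_roots/s_roots | /s_roots/s'_roots].
Qed.

Lemma root_capacity_Fadjoin K (M : {subfield E}) (L : {vspace E}) y s :
  (K <= M)%VS -> <<K; y>>%VS = L -> is_roots_in M (minPoly K y) s ->
  root_capacity K M L = size s.
Proof.
move=> sKM DL [s_uniq s_roots]; rewrite /root_capacity; set x := prim_elt K L.
have Dx : <<K; x>>%VS = L.
  by apply: (epsilon_spec (inhabits 0) (fun x => <<K; x>>%VS = L)); exists y.
have /Fadjoin_polyP[Q KQ DxQ] : x \in <<K; y>>%VS by rewrite DL -Dx memv_adjoin.
have /Fadjoin_polyP[R KR DyR] : y \in <<K; x>>%VS by rewrite Dx -DL memv_adjoin.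
have MQ t : t \in M -> Q.[t] \in M by apply: rpred_horner; apply: polyOverSv KQ.
have MR t : t \in M -> R.[t] \in M by apply: rpred_horner; apply: polyOverSv KR.
have RQ t : root (minPoly K y) t -> R.[Q.[t]] = t.
  by apply: horner_minPoly_cancel; rewrite // -DxQ.
have QR t : root (minPoly K x) t -> Q.[R.[t]] = t.
  by apply: horner_minPoly_cancel; rewrite // -DyR.
rewrite (@num_roots_inE _ _ [seq Q.[t] | t <- s]) ?size_map //; split.
  rewrite map_inj_in_uniq // => t1 t2 /s_roots[_ r1] /s_roots[_ r2] Qt12.
  by rewrite -(RQ t1 r1) Qt12 RQ.
move=> t; split.
  case/mapP=> t' /s_roots[Mt' rt'] ->; split; first exact: MQ.
  by rewrite DxQ; apply: root_minPoly_horner.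
case=> Mt rt; apply/mapP; exists R.[t]; last by rewrite QR.
by apply/s_roots; split; [exact: MR | rewrite DyR; apply: root_minPoly_horner].
Qed.

Lemma kHom_img_Fadjoin K x (f : 'End(E)) :
  kHom K <<K; x>> f -> (f @: <<K; x>>)%VS = <<K; f x>>%VS.
Proof.
move=> f_hom; have x_in := memv_adjoin K x.
have f_horner p : p \is a polyOver K -> f p.[x] = p.[f x].
  move=> Kp; rewrite (kHom_horner f_hom) ?(kHom_poly_id f_hom) //.
  exact: polyOverSv (subv_adjoin K x) _ Kp.
apply/vspaceP => v; apply/memv_imgP/Fadjoin_polyP.
  by case=> _ /Fadjoin_polyP[p Kp ->] ->; exists p; rewrite ?f_horner.
case=> p Kp ->; exists p.[x]; last by rewrite f_horner.
by apply/Fadjoin_polyP; exists p.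
Qed.

Lemma iso_over_FadjoinP K x (L' : {vspace E}) :
  iso_over K <<K; x>> L' <-> exists2 y, root (minPoly K x) y & L' = <<K; y>>%VS.
Proof.
split=> [[f [f_hom <-]] | [y xy ->]].
  exists (f x); last exact: kHom_img_Fadjoin.
  have Kx_minPoly := polyOverSv (subv_adjoin K x) (minPolyOver K x).
  have := kHom_root f_hom Kx_minPoly (memv_adjoin K x) (root_minPoly K x).
  by rewrite (kHom_poly_id f_hom) ?minPolyOver.
have xy' : root (map_poly \1%VF (minPoly K x)) y.
  by rewrite map_poly_id // => v _; rewrite id_lfunE.
have f_hom := kHomExtendP (subvv K) (kHom1 K K) xy'.
exists (kHomExtend K \1%VF x y); split; first exact: f_hom.
by rewrite kHom_img_Fadjoin // (kHomExtend_val (kHom1 K K)).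
Qed.

Lemma intersection_indiciumE (K M L I : {vspace E}) :
  (exists L', conj_in K M L L') ->
  (forall v, v \in I <-> (forall L', conj_in K M L L' -> v \in L')) ->
  intersection_indicium K M L = \dim_K I.
Proof.
move=> L'_ex DI; rewrite /intersection_indicium.
case: excluded_middle_informative => [{}L'_ex | []//] /=; congr (\dim _ %/ _)%N.
have DI' := epsilon_spec (inhabits 0%VS)
  (fun I => forall v, v \in I <-> (forall L', conj_in K M L L' -> v \in L'))
  (ex_intro _ I DI).
by apply/vspaceP => v; apply/idP/idP => [/DI'/DI | /DI/DI'].
Qed.

Lemma adjoin_degree_gt0 K x : (0 < adjoin_degree K x)%N.
Proof. by rewrite -(ltn_pmul2r (adim_gt0 K)) mul0n -dim_Fadjoin adim_gt0. Qed.

Lemma Kummer_adjoin_degree K (n : nat) (z x : E) :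
  n.-primitive_root z -> x ^+ n \in K ->
  exists k, x ^+ adjoin_degree K x * z ^+ k \in K.
Proof.
move=> z_prim xnK.
have : minPoly K x %| \prod_(i < n) ('X - (x * z ^+ i)%:P).
  rewrite -(Xn_subC_prod_prim_root _ z_prim) minPoly_dvdp ?polyOverXnsubC //.
  by rewrite rootE !hornerE subrr.
case/dvdp_prod_XsubC=> b; rewrite eqp_monic ?monic_minPoly ?monic_prod_XsubC //.
move/eqP=> Dmin; exists (\sum_(i <- mask b (index_enum 'I_n)) i)%N.
have size_mask : size (mask b (index_enum 'I_n)) = adjoin_degree K x.
  by apply: succn_inj; rewrite -size_minPoly Dmin size_prod_XsubC.
have := minPolyOver K x => /polyOverP/(_ 0%N).
rewrite -horner_coef0 Dmin horner0_prod_XsubC_mul size_mask.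
move/(rpredM (rpredX (adjoin_degree K x) (rpredN1 K))).
by rewrite mulrA -exprMn mulN1r opprK.
Qed.
End FieldExtension.

Section RealEmbedding.
Variables (E : fieldExtType rat) (iota : {rmorphism E -> algC}).
Implicit Types (x y : E) (P : {poly rat}).

Lemma iota_alg (r : rat) : iota r%:A = ratr r.
Proof. by rewrite alg_num_field fmorph_rat. Qed.

Lemma iota_horner P y : iota (map_poly (in_alg E) P).[y] = (QtoC P).[iota y].
Proof.
rewrite -horner_map -map_poly_comp; congr (_.[_]).
by apply: eq_map_poly => r /=; rewrite iota_alg.
Qed.

Lemma iota_Fadjoin1 x y : y \in <<1; x>>%VS -> exists P, iota y = (QtoC P).[iota x].
Proof. by case/Fadjoin1_polyP=> P ->; exists P; rewrite iota_horner. Qed.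

Lemma iota_Fadjoin1_real x y :
  iota x \is Num.real -> y \in <<1; x>>%VS -> iota y \is Num.real.
Proof.
move=> xR /iota_Fadjoin1[P ->]; apply: rpred_horner xR.
by apply/polyOverP => i; rewrite coef_map Creal_Crat ?Crat_rat.
Qed.

Lemma Fadjoin1_real_unity_eq1 x y (m : nat) :
  iota x \is Num.real -> odd m -> y \in <<1; x>>%VS -> y ^+ m = 1 -> y = 1.
Proof.
move=> xR m_odd xy ym; apply: (fmorph_inj iota); rewrite rmorph1.
apply: (real_unity_odd_eq1 m_odd (iota_Fadjoin1_real xR xy)).
by rewrite -rmorphXn ym rmorph1.
Qed.

(* Oddness is needed: a primitive 6th root of unity [z] lies in [Q(z ^+ 2)]. *)
Lemma prim_root_exp_in_Fadjoin (n l k : nat) (zeta : E) :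
  odd n -> n.-primitive_root zeta -> (l %| n)%N ->
  zeta ^+ k \in <<1; zeta ^+ l>>%VS -> (l %| k)%N.
Proof.
move=> n_odd zeta_prim ln zk_in.
have [-> | k_gt0] := posnP k; first exact: dvdn0.
set e := gcdn k l; have el : (e %| l)%N := dvdn_gcdr k l.
have ze_in : zeta ^+ e \in <<1; zeta ^+ l>>%VS.
  have [u v Duv _] := egcdnP l k_gt0.
  have -> : zeta ^+ e = (zeta ^+ k) ^+ u / (zeta ^+ l) ^+ v.
    rewrite -!exprM mulnC Duv -/e addnC mulnC exprD mulfK //.
    by rewrite expf_neq0 // (prim_root_neq0 zeta_prim).
  suff : (zeta ^+ k) ^+ u / (zeta ^+ l) ^+ v \in <<1%AS; zeta ^+ l>>%AS by [].
  have zk_in' : zeta ^+ k \in <<1%AS; zeta ^+ l>>%AS by [].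
  by apply: rpred_div; apply: rpredX; [exact: zk_in' | exact: memv_adjoin].
have e_gt0 : (0 < e)%N by rewrite gcdn_gt0 k_gt0.
have en : (e %| n)%N := dvdn_trans el ln.
set x := iota zeta ^+ e.
have x_prim : (n %/ e).-primitive_root x.
  have := exp_prim_root (etrans (fmorph_primitive_root iota n zeta) zeta_prim) e.
  by rewrite (gcdn_idPl en).
have [P DP] := iota_Fadjoin1 ze_in.
have le : (l %/ e = 1)%N.
  apply: (@odd_prim_root_Fadjoin_exp _ _ _ P _ x_prim).
  - exact: dvdn_odd (dvdn_div en) n_odd.
  - by rewrite -(dvdn_pmul2r e_gt0) !divnK.
  - by rewrite /x -exprM mulnC divnK // -!rmorphXn DP.
by rewrite -(divnK el) le mul1n dvdn_gcdl.
Qed.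
End RealEmbedding.

Section PureRadicalExtension.
Variables (E : fieldExtType rat) (iota : {rmorphism E -> algC}).
Variables (n : nat) (c : rat) (a zeta : E).
Hypotheses (n_odd : odd n) (zeta_prim : n.-primitive_root zeta)
  (p_irr : irreducible_poly ('X^n - c%:P : {poly rat}))
  (an : a ^+ n = c%:A) (iota_a_gt0 : 0 < iota a).

Let n_gt0 : (0 < n)%N := prim_order_gt0 zeta_prim.
Let iota_a_real : iota a \is Num.real := gtr0_real iota_a_gt0.
Let zeta_neq0 : zeta != 0 := prim_root_neq0 zeta_prim.
Let a_neq0 : a != 0. Proof. by rewrite -(fmorph_eq0 iota) gt_eqF. Qed.

Lemma minPoly_radical y : y ^+ n = a ^+ n -> minPoly 1 y = 'X^n - (a ^+ n)%:P.
Proof.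
move=> yn; have Dp : map_poly (in_alg E) ('X^n - c%:P) = 'X^n - (a ^+ n)%:P.
  by rewrite rmorphB /= map_polyXn map_polyC an.
rewrite -Dp (minPoly_irreducible _ p_irr) ?monicXnsubC // Dp.
by rewrite rootE !hornerE yn subrr.
Qed.

Lemma radical_root_transfer y y' (P : {poly rat}) :
  y ^+ n = a ^+ n -> y' ^+ n = a ^+ n ->
  root (map_poly (in_alg E) P) y -> root (map_poly (in_alg E) P) y'.
Proof.
move=> yn y'n Py; apply: (root_minPoly_conj (K := 1%AS)) (alg_polyOver _ _) Py _.
by rewrite minPoly_radical // rootE !hornerE y'n subrr.
Qed.

Lemma adjoin_degree1_radical : adjoin_degree 1 a = n.
Proof. by apply: succn_inj; rewrite -size_minPoly minPoly_radical // size_XnsubC. Qed.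

(* [iota (a ^+ t)] is a real element of [Q(iota zeta)] with rational [n]-th
   power, hence rational. *)
Lemma radical_exp_in_cyclotomic (t : nat) :
  (0 < t)%N -> a ^+ t \in <<1; zeta>>%VS -> (n <= t)%N.
Proof.
move=> t_gt0 /(iota_Fadjoin1 iota)[P DP].
have /CratP[r Dr] : iota (a ^+ t) \in Crat.
  rewrite DP; apply: Crat_real_prim_root_poly n_odd _ _ _.
  - by rewrite fmorph_primitive_root.
  - by rewrite -DP rmorphXn rpredX.
  by rewrite -DP -rmorphXn -exprM mulnC exprM an rmorphXn iota_alg rpredX ?Crat_rat.
rewrite -adjoin_degree1_radical adjoin_degree_le_exp //.
have -> : a ^+ t = r%:A by apply: (fmorph_inj iota); rewrite Dr iota_alg.
by rewrite memvZ ?mem1v.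
Qed.

Lemma adjoin_degree_radical_cyclotomic (K : {subfield E}) :
  (K <= <<1; zeta>>)%VS -> adjoin_degree K a = n.
Proof.
move=> sK; apply/eqP; rewrite eqn_leq adjoin_degree_le_exp ?an ?memvZ ?mem1v //=.
have [k akK] : exists k, a ^+ adjoin_degree K a * zeta ^+ k \in K.
  by apply: (Kummer_adjoin_degree zeta_prim); rewrite an memvZ ?mem1v.
apply: radical_exp_in_cyclotomic (adjoin_degree_gt0 K a) _.
suff : a ^+ adjoin_degree K a * zeta ^+ k / zeta ^+ k \in <<1%AS; zeta>>%AS.
  by rewrite mulfK // expf_neq0.
by apply: rpred_div; [exact: (subvP sK) | apply/rpredX/memv_adjoin].
Qed.

(* [K(y)(a) = K(a)], and adjoining [a] multiplies the dimensions of both [K]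
   and [K(y)] by [n]; hence [K(y) = K]. *)
Lemma Fadjoin_radical_cap_cyclotomic (K : {subfield E}) y :
  (K <= <<1; zeta>>)%VS -> y \in <<1; zeta>>%VS -> y \in <<K; a>>%VS -> y \in K.
Proof.
move=> sK y_cyc yKa; set K' := <<K; y>>%AS.
have sK' : (K' <= <<1; zeta>>)%VS by apply/FadjoinP.
have DK'a : <<K'; a>>%VS = <<K; a>>%VS.
  apply/eqP; rewrite eqEsubv (adjoinSl _ (subv_adjoin K y)) andbT.
  apply/FadjoinP; split; last exact: memv_adjoin.
  by apply/FadjoinP; split; [exact: subv_adjoin | exact: yKa].
have dimK' : \dim K' = \dim K.
  have := dim_Fadjoin K' a; rewrite DK'a dim_Fadjoin.
  rewrite !adjoin_degree_radical_cyclotomic // => /eqP.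
  by rewrite eqn_mul2l gtn_eqF // eq_sym => /eqP.
have /eqP -> : K == K' :> {vspace E} by rewrite eqEdim subv_adjoin dimK' leqnn.
exact: memv_adjoin.
Qed.

Lemma dim_radical : \dim <<1; a>> = n.
Proof. by rewrite dim_Fadjoin adjoin_degree1_radical dimv1 muln1. Qed.

Variable l : nat.
Hypothesis l_dvd_n : (l %| n)%N.

Local Notation omega := (zeta ^+ l).
Local Notation m := (n %/ l)%N.
Local Notation L := <<1; a>>%VS.
Local Notation M := <<<<1; a>>; omega>>%VS.

Let Dn : n = (m * l)%N. Proof. by rewrite divnK. Qed.
Let l_gt0 : (0 < l)%N := dvdn_gt0 n_gt0 l_dvd_n.
Let m_gt0 : (0 < m)%N. Proof. by rewrite divn_gt0 // (dvdn_leq n_gt0 l_dvd_n). Qed.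
Let m_odd : odd m. Proof. exact: dvdn_odd (dvdn_div l_dvd_n) n_odd. Qed.

Lemma prim_root_omega : m.-primitive_root omega.
Proof.
have := dvdn_prim_root zeta_prim (dvdn_div l_dvd_n).
by rewrite {2}Dn (mulKn _ m_gt0).
Qed.

Lemma omega_exp_m j : (omega ^+ j) ^+ m = 1.
Proof. by rewrite exprAC (prim_expr_order prim_root_omega) expr1n. Qed.

Lemma radical_root_a_omega j : (a * omega ^+ j) ^+ n = a ^+ n.
Proof.
by rewrite exprMn -!exprM mulnC !exprM (prim_expr_order zeta_prim) !expr1n mulr1.
Qed.

Lemma a_omega_in_M j : a * omega ^+ j \in M.
Proof.
suff : a * omega ^+ j \in <<<<1%AS; a>>; omega>>%AS by [].
apply: rpredM; last exact/rpredX/memv_adjoin.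
exact/(subvP (subv_adjoin _ _))/memv_adjoin.
Qed.

Lemma zeta_exp_in_M k : zeta ^+ k \in M -> (l %| k)%N.
Proof.
move=> zkM; apply: (prim_root_exp_in_Fadjoin iota n_odd zeta_prim l_dvd_n).
apply: (@Fadjoin_radical_cap_cyclotomic <<1; omega>>%AS).
- by rewrite sub_adjoin1v rpredX ?memv_adjoin.
- by rewrite rpredX ?memv_adjoin.
- by rewrite adjoinC.
Qed.

Lemma radical_roots_in_M y :
  y ^+ n = a ^+ n -> y \in M -> exists2 j, (j < m)%N & y = a * omega ^+ j.
Proof.
move=> yn yM.
have : (y / a) ^+ n = 1 by rewrite exprMn exprVn yn divff // expf_neq0.
case/(prim_rootP zeta_prim) => i Di.
have /zeta_exp_in_M li : zeta ^+ i \in M.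
  suff : y / a \in <<<<1%AS; a>>; omega>>%AS by rewrite Di.
  by rewrite rpred_div // (subvP (subv_adjoin _ _)) ?memv_adjoin.
exists (i %/ l)%N; first by rewrite ltn_divLR // -Dn.
by rewrite -exprM mulnC divnK // -Di mulrC mulfVK.
Qed.

Lemma root_capacity_radical : root_capacity 1 M L = m.
Proof.
pose s := [seq a * omega ^+ j | j <- seq.iota 0 m].
rewrite (@root_capacity_Fadjoin _ _ 1%AS <<<<1%AS; a>>; omega>>%AS _ a s).
- by rewrite size_map size_iota.
- exact: sub1v.
- by [].
split.
  rewrite map_inj_in_uniq ?iota_uniq // => i j.
  rewrite !mem_iota /= !add0n => im jm.
  move/(mulfI a_neq0)/eqP.
  by rewrite (eq_prim_root_expr prim_root_omega) !modn_small // => /eqP.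
move=> y; rewrite minPoly_radical // rootE !hornerE subr_eq0; split.
  by case/mapP=> j _ ->; rewrite a_omega_in_M radical_root_a_omega.
case=> yM /eqP /radical_roots_in_M /(_ yM)[j jm ->].
by apply/mapP; exists j; rewrite // mem_iota.
Qed.

Lemma conj_in_a_omega j : conj_in 1 M L <<1; a * omega ^+ j>>%VS.
Proof.
split; first by rewrite sub_adjoin1v a_omega_in_M.
apply/(iso_over_FadjoinP 1%AS a); exists (a * omega ^+ j) => //.
by rewrite minPoly_radical // rootE !hornerE radical_root_a_omega subrr.
Qed.

Lemma Fadjoin_exp_m_sub_conj L' : conj_in 1 M L L' -> (<<1; a ^+ m>> <= L')%VS.
Proof.
case=> sL'M /(iso_over_FadjoinP 1%AS a)[y]; rewrite minPoly_radical //.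
rewrite rootE !hornerE subr_eq0 => /eqP yn DL'; rewrite DL'.
have /(radical_roots_in_M yn)[j _ ->] : y \in M.
  by rewrite (subvP sL'M) // DL' memv_adjoin.
have -> : a ^+ m = (a * omega ^+ j) ^+ m by rewrite exprMn omega_exp_m mulr1.
by rewrite sub_adjoin1v rpredX ?memv_adjoin.
Qed.

Lemma dim_Fadjoin_exp_m_ge : (l <= \dim <<1; a ^+ m>>)%N.
Proof.
set K := <<1; a ^+ m>>%AS.
have DL : <<K; a>>%VS = L.
  by apply: Fadjoin_subfield_eq; rewrite sub_adjoin1v rpredX ?memv_adjoin.
have Dnd : n = (adjoin_degree K a * \dim K)%N.
  by rewrite -dim_radical -DL dim_Fadjoin.
have le_dm := adjoin_degree_le_exp m_gt0 (memv_adjoin 1%AS (a ^+ m)) (K := K).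
by rewrite -(leq_pmul2l m_gt0) -Dn {1}Dnd leq_mul2r le_dm orbT.
Qed.

(* Transport the relation [omega ^+ t = R (a * omega)] to the conjugate [a]:
   there it reads [R a ^+ m = 1], which forces [R a = 1] since [Q(a)] is real. *)
Lemma omega_exp_in_conj (t : nat) :
  omega ^+ t \in <<1; a * omega>>%VS -> (m %| t)%N.
Proof.
case/Fadjoin1_polyP=> R DR.
have aw_root : (a * omega) ^+ n = a ^+ n by rewrite -[omega]expr1 radical_root_a_omega.
have Ra_unity : (map_poly (in_alg E) R).[a] ^+ m = 1.
  have : root (map_poly (in_alg E) (R ^+ m - 1)) a.
    apply: (radical_root_transfer aw_root) => //.
    by rewrite rootE rmorphB rmorphXn rmorph1 !hornerE -DR omega_exp_m subrr.
  by rewrite rootE rmorphB rmorphXn rmorph1 !hornerE subr_eq0 => /eqP.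
have Ra1 : (map_poly (in_alg E) R).[a] = 1.
  apply: (Fadjoin1_real_unity_eq1 iota_a_real m_odd _ Ra_unity).
  by apply/Fadjoin1_polyP; exists R.
have : root (map_poly (in_alg E) (R - 1)) (a * omega).
  apply: (radical_root_transfer _ aw_root) => //.
  by rewrite rootE rmorphB rmorph1 !hornerE Ra1 subrr.
rewrite rootE rmorphB rmorph1 !hornerE -DR subr_eq0.
by rewrite -(prim_order_dvd prim_root_omega).
Qed.

Lemma dim_cap_conj_le : (\dim (L :&: <<1; a * omega>>) <= l)%N.
Proof.
set K := (<<1%AS; a>> :&: <<1%AS; a * omega>>)%AS.
have sKL : (K <= L)%VS := capvSl _ _.
have sKaw : (K <= <<1; a * omega>>)%VS := capvSr _ _.
set t := adjoin_degree K a.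
have [k akK] : exists k, a ^+ t * zeta ^+ k \in K.
  by apply: (Kummer_adjoin_degree zeta_prim); rewrite an memvZ ?mem1v.
have at_neq0 : a ^+ t != 0 by rewrite expf_neq0.
have zk1 : zeta ^+ k = 1.
  apply: (Fadjoin1_real_unity_eq1 iota_a_real n_odd); last first.
    by rewrite exprAC (prim_expr_order zeta_prim) expr1n.
  suff : a ^+ t * zeta ^+ k / a ^+ t \in <<1%AS; a>>%AS by rewrite mulrC mulKf.
  by apply: rpred_div; [exact: (subvP sKL) | exact/rpredX/memv_adjoin].
rewrite zk1 mulr1 in akK.
have /omega_exp_in_conj mt : omega ^+ t \in <<1; a * omega>>%VS.
  suff : (a * omega) ^+ t / a ^+ t \in <<1%AS; a * omega>>%AS.
    by rewrite exprMn mulrC mulKf.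
  by apply: rpred_div; [exact/rpredX/memv_adjoin | exact: (subvP sKaw)].
have DL : <<K; a>>%VS = L by apply: Fadjoin_subfield_eq.
have := dim_Fadjoin K a; rewrite DL dim_radical Dn => Dml.
rewrite -(leq_pmul2l m_gt0) Dml (leq_pmul2r (adim_gt0 K)).
exact: dvdn_leq (adjoin_degree_gt0 K a) mt.
Qed.

Lemma cap_conj_radical : (L :&: <<1; a * omega>>)%VS = <<1; a ^+ m>>%VS.
Proof.
apply/eqP; rewrite eq_sym eqEdim (leq_trans dim_cap_conj_le dim_Fadjoin_exp_m_ge) andbT.
rewrite subv_cap (Fadjoin_exp_m_sub_conj (conj_in_a_omega 1)) andbT.
by have := Fadjoin_exp_m_sub_conj (conj_in_a_omega 0); rewrite expr0 mulr1.
Qed.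

Lemma intersection_indicium_radical : intersection_indicium 1 M L = l.
Proof.
have L_conj : conj_in 1 M L L by have := conj_in_a_omega 0; rewrite expr0 mulr1.
rewrite (@intersection_indiciumE _ _ 1 M L <<1; a ^+ m>>%VS).
- rewrite dimv1 divn1; apply/eqP; rewrite eqn_leq dim_Fadjoin_exp_m_ge andbT.
  by rewrite -cap_conj_radical dim_cap_conj_le.
- by exists L.
move=> v; split=> [v_in L' /Fadjoin_exp_m_sub_conj/subvP | v_conj]; first exact.
move: (v_conj _ L_conj) (v_conj _ (conj_in_a_omega 1)).
by rewrite expr1 -cap_conj_radical memv_cap => -> ->.
Qed.
End PureRadicalExtension.

Theorem mainTheorem15 (E : fieldExtType rat) (iota : {rmorphism E -> algC})
    (n : nat) (c : rat) (a zeta : E) (l : nat) :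
  (2 < n)%N -> odd n ->
  n.-primitive_root zeta ->
  0 < c ->
  irreducible_poly ('X^n - c%:P : {poly rat}) ->
  a ^+ n = c%:A -> 0 < iota a ->
  (0 < l)%N -> (l %| n)%N ->
  let L := <<1%VS; a>>%VS in
  let M := <<<<1%VS; a>>; zeta ^+ l>>%VS in
  [/\ root_capacity 1%VS M L = (n %/ l)%N,
      intersection_indicium 1%VS M L = l
    & (intersection_indicium 1%VS M L * root_capacity 1%VS M L)%N
        = \dim_(1%VS : {vspace E}) L].
Proof.
move=> _ n_odd zeta_prim _ p_irr an iota_a_gt0 _ l_dvd_n L M.
have rho := root_capacity_radical n_odd zeta_prim p_irr an iota_a_gt0 l_dvd_n.
have tau := intersection_indicium_radical n_odd zeta_prim p_irr an iota_a_gt0 l_dvd_n.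
split=> //; rewrite rho tau dimv1 divn1 (dim_radical zeta_prim p_irr an).
by rewrite mulnC divnK.
Qed.
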